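(* Let $V$ be an oriented $4$-dimensional real inner product space with an oriented orthonormal basis $f^1,\dots,f^4$ of $V^*$ and dual basis $f_1,\dots,f_4$ of $V$, let $\omega_1=f^1\wedge f^2+f^3\wedge f^4$, $\omega_2=f^1\wedge f^3+f^4\wedge f^2$, $\omega_3=f^1\wedge f^4+f^2\wedge f^3$, and let $e_1,e_2,e_3$ be the standard basis of $\mathbb{R}^3$. Consider the linear map $C:V\otimes V^*\otimes\mathbb{R}^3\to V^*\otimes V^*\otimes\Lambda^2\mathbb{R}^3$, $$C:\ s^{pk}_qf_p\otimes f^q\otimes e_k\longmapsto\sum_{j=1}^3s^{pk}_q(f_p\lrcorner\omega_j)\otimes f^q\otimes(e_k\wedge e_j)$$ (summation over repeated indices), where $f_p\lrcorner\omega_j\in V^*$ is the interior product. Then $C$ is an isomorphism.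
   Context: $\omega_1,\omega_2,\omega_3$ are the standard hyperkähler (self-dual) $2$-forms on $V$. *)

From HB Require Import structures.
From mathcomp Require Import all_boot all_order all_algebra.
From mathcomp Require Import reals.
Set Implicit Arguments. Unset Strict Implicit. Unset Printing Implicit Defensive.
Import Order.TTheory GRing.Theory Num.Theory.
Local Open Scope ring_scope.

(* Coordinates: V = R^4 with the oriented orthonormal basis f_1..f_4 (indices
   0..3 here), dual basis f^1..f^4 of V^*; R^3 with standard basis e_1,e_2,e_3
   (indices 0..2). *)

(* A 2-form on V is represented by its (antisymmetric) matrix of values
   w(f_a, f_b).  (f^i /\ f^j)(f_a,f_b) = [a=i][b=j] - [a=j][b=i]. *)
Definition wedge2 (R : nzRingType) (i j : 'I_4) : 'M[R]_4 :=
  \matrix_(a < 4, b < 4) (((a == i) && (b == j))%:R - ((a == j) && (b == i))%:R).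

Definition omega (R : nzRingType) (j : 'I_3) : 'M[R]_4 :=
  match val j with
  | 0 => wedge2 R 0 1 + wedge2 R 2 3
  | 1 => wedge2 R 0 2 + wedge2 R 3 1
  | _ => wedge2 R 0 3 + wedge2 R 1 2
  end.

Definition interior (R : nzRingType) (p : 'I_4) (w : 'M[R]_4) (r : 'I_4) : R :=
  w p r.

(* Basis of Lambda^2 R^3: e_a /\ e_b with a < b. *)
Definition L2idx := {ab : 'I_3 * 'I_3 | (ab.1 < ab.2)%N}.

(* Coefficient of e_a/\e_b (a<b) in e_k /\ e_j. *)
Definition wedgecoef (R : nzRingType) (k j : 'I_3) (ab : L2idx) : R :=
  ((k == (val ab).1) && (j == (val ab).2))%:R
  - ((k == (val ab).2) && (j == (val ab).1))%:R.

(* Domain V (x) V^* (x) R^3 : s = s^{pk}_q f_p (x) f^q (x) e_k,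
   coefficient s (p, q, k).
   Codomain V^* (x) V^* (x) Lambda^2 R^3 : coefficient t (r, q, ab) of
   f^r (x) f^q (x) (e_a /\ e_b). *)
Notation domT R := {ffun 'I_4 * 'I_4 * 'I_3 -> R}.
Notation codT R := {ffun 'I_4 * 'I_4 * L2idx -> R}.

Definition Cmap (R : nzRingType) (s : domT R) : codT R :=
  [ffun x : 'I_4 * 'I_4 * L2idx =>
     let: (r, q, ab) := x in
     \sum_(p < 4) \sum_(k < 3) \sum_(j < 3)
        s (p, q, k) * interior p (omega R j) r * wedgecoef R k j ab].

From HB Require Import structures.
From mathcomp Require Import all_boot all_order all_algebra.
From mathcomp Require Import reals.
Set Implicit Arguments.
Unset Strict Implicit.
Unset Printing Implicit Defensive.
Import GRing.Theory Num.Theory.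
Local Open Scope ring_scope.

(* Fix the index q and write s_k for the vector (s^{pk}_q)_p and J_j for the
   matrix of v |-> v _| omega_j, i.e. omega_j^T.  In the basis e1/\e2, e1/\e3,
   e2/\e3 of Lambda^2 R^3, C sends (s_1, s_2, s_3) to
   (J_2 s_1 - J_1 s_2, J_3 s_1 - J_1 s_3, J_3 s_2 - J_2 s_3).
   The J_j satisfy the quaternion relations J_j^2 = -1, J_1 J_2 = J_3, and for
   any such triple in a ring the map above has the explicit "adjugate"
   t |-> (t_23 - J_2 t_12 - J_3 t_13, J_1 t_12 - J_3 t_23 - t_13,
          J_1 t_13 + J_2 t_23 + t_12)
   whose composite with it, in either order, is multiplication by 2.  Taking the s_k
   to be 4x4 matrices indexed by (p, q) handles all q at once. *)

Section Quaternions.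
Variables (A : pzRingType) (i j k : A).
Hypotheses (ii : i * i = -1) (jj : j * j = -1) (kk : k * k = -1) (ij : i * j = k).

Lemma quat_ik : i * k = - j. Proof. by rewrite -ij mulrA ii mulN1r. Qed.

Lemma quat_kj : k * j = - i. Proof. by rewrite -ij -mulrA jj mulrN1. Qed.

Lemma quat_jk : j * k = i.
Proof.
have -> : j * k = - (i * i) * (j * k) by rewrite ii opprK mul1r.
by rewrite mulNr -!mulrA (mulrA i j) ij kk mulrN1 opprK.
Qed.

Lemma quat_ki : k * i = j.
Proof.
have -> : k * i = k * i * - (j * j) by rewrite jj opprK mulr1.
by rewrite mulrN !mulrA -(mulrA k i j) ij kk mulN1r opprK.
Qed.

Lemma quat_ji : j * i = - k.
Proof. by rewrite -{1}quat_jk mulrA jj mulN1r. Qed.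

Definition qwedge (s : A * A * A) : A * A * A :=
  let: (s1, s2, s3) := s in (j * s1 - i * s2, k * s1 - i * s3, k * s2 - j * s3).

Definition qadj (t : A * A * A) : A * A * A :=
  let: (t12, t13, t23) := t in
  (t23 - j * t12 - k * t13, i * t12 - k * t23 - t13, i * t13 + j * t23 + t12).

Lemma qadj_qwedge s : qadj (qwedge s) = s *+ 2.
Proof.
case: s => [[s1 s2] s3]; rewrite [RHS]mulr2n /= !mulrBr !mulrA.
rewrite ii jj kk quat_ji quat_ki quat_ik quat_kj ij quat_jk !mulN1r !mulNr !opprB !opprK.
congr (_, _, _).
- by rewrite (AC ((2*2)*2) ((1*3)*(2*5)*(4*6))) /= !(subrr, addNr) !add0r.
- by rewrite (AC ((2*2)*2) ((1*6)*(3*5)*(2*4))) /= !(subrr, addNr) !add0r.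
- by rewrite (AC ((2*2)*2) ((1*5)*(3*6)*(2*4))) /= !(subrr, addNr) !add0r.
Qed.

Lemma qwedge_qadj t : qwedge (qadj t) = t *+ 2.
Proof.
case: t => [[t12 t13] t23]; rewrite [RHS]mulr2n /= !mulrBr !mulrDr !mulrA.
rewrite ii jj kk quat_ji quat_ki quat_ik quat_kj ij quat_jk !mulN1r !mulNr !opprD !opprK.
congr (_, _, _).
- by rewrite (AC (3*3) ((1*5)*(3*6)*(2*4))) /= !(subrr, addNr) !add0r.
- by rewrite (AC (3*3) ((1*5)*(2*6)*(3*4))) /= !(subrr, addNr) !add0r.
- by rewrite (AC (3*3) ((1*6)*(3*4)*(2*5))) /= !(subrr, addNr) !add0r.
Qed.
End Quaternions.

Lemma qwedgeZ (K : nzRingType) (A : algType K) (i j k : A) c s :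
  qwedge i j k (c *: s) = c *: qwedge i j k s.
Proof. by case: s => [[s1 s2] s3]; rewrite /= -!scalerAr -!scalerBr. Qed.

Lemma qwedge_bij (K : fieldType) (A : algType K) (i j k : A) :
    2 != 0 :> K -> i * i = -1 -> j * j = -1 -> k * k = -1 -> i * j = k ->
  bijective (qwedge i j k).
Proof.
move=> two_neq0 ii jj kk ij.
have halfK (x : A * A * A) : 2^-1 *: (x *+ 2) = x.
  by rewrite -scaler_nat scalerA mulVf ?scale1r.
exists (fun t => 2^-1 *: qadj i j k t) => [s | t].
- by rewrite qadj_qwedge.
- by rewrite qwedgeZ qwedge_qadj.
Qed.

Local Notation o3 n := (@Ordinal 3 n isT).

Definition Jmx (R : nzRingType) (j : 'I_3) : 'M[R]_4 := (omega R j)^T.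

Local Ltac entrywise :=
  apply/matrixP => -[[|[|[|[|//]]]] ?] -[[|[|[|[|//]]]] ?];
  rewrite !mxE !big_ord_recr big_ord0 /= !mxE /=;
  by rewrite ?(subr0, sub0r, addr0, add0r, mul0r, mulr0, mulr1, mul1r, mulN1r,
                oppr0, opprK).

Lemma Jmx_sqr (R : comNzRingType) (j : 'I_3) : Jmx R j * Jmx R j = -1.
Proof. by case: j => -[|[|[|//]]] ?; entrywise. Qed.

Lemma Jmx_mul01 (R : comNzRingType) : Jmx R (o3 0) * Jmx R (o3 1) = Jmx R (o3 2).
Proof. entrywise. Qed.

Lemma ord3_cases (k : 'I_3) : [\/ k = o3 0, k = o3 1 | k = o3 2].
Proof.
by case: k => -[|[|[|//]]] ?; [apply: Or31 | apply: Or32 | apply: Or33]; apply/eqP.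
Qed.

Definition e12 : L2idx := exist _ (o3 0, o3 1) isT.
Definition e13 : L2idx := exist _ (o3 0, o3 2) isT.
Definition e23 : L2idx := exist _ (o3 1, o3 2) isT.

Lemma L2idx_cases (ab : L2idx) : [\/ ab = e12, ab = e13 | ab = e23].
Proof.
case: ab => -[[[|[|[|//]]] ?] [[|[|[|//]]] ?]] //= ?;
  by [apply: Or31; apply/eqP | apply: Or32; apply/eqP | apply: Or33; apply/eqP].
Qed.

Lemma sum2_delta (R : nzRingType) (I J : finType) (F : I -> J -> R) a b :
  \sum_i \sum_j F i j * ((i == a) && (j == b))%:R = F a b.
Proof.
rewrite (bigD1 a) //= [X in _ + X]big1 => [|i /negbTE ia]; last first.
  by apply: big1 => j _; rewrite ia mulr0.
rewrite addr0 (bigD1 b) //= big1 => [|j /negbTE jb]; last by rewrite jb andbF mulr0.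
by rewrite !eqxx mulr1 addr0.
Qed.

Lemma sum_wedgecoef (R : nzRingType) (F : 'I_3 -> 'I_3 -> R) (ab : L2idx) :
  \sum_k \sum_j F k j * wedgecoef R k j ab =
  F (val ab).1 (val ab).2 - F (val ab).2 (val ab).1.
Proof.
rewrite -!sum2_delta -sumrB; apply: eq_bigr => k _.
by rewrite -sumrB; apply: eq_bigr => j _; rewrite -mulrBr.
Qed.

Section Coordinates.
Variable R : nzRingType.

Definition dom_mx (s : domT R) (k : 'I_3) : 'M[R]_4 := \matrix_(p, q) s (p, q, k).
Definition dom3 (s : domT R) := (dom_mx s (o3 0), dom_mx s (o3 1), dom_mx s (o3 2)).

Definition pick3 T (x : T * T * T) (k : 'I_3) : T :=
  match val k with 0 => x.1.1 | 1 => x.1.2 | _ => x.2 end.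

Definition dom_of3 (S : 'M[R]_4 * 'M[R]_4 * 'M[R]_4) : domT R :=
  [ffun x => let: (p, q, k) := x in pick3 S k p q].

Lemma dom3K : cancel dom3 dom_of3.
Proof.
by move=> s; apply/ffunP => -[[p q] k]; case: (ord3_cases k) => ->; rewrite ffunE mxE.
Qed.

Lemma dom_of3K : cancel dom_of3 dom3.
Proof.
by move=> [[S1 S2] S3]; congr (_, _, _); apply/matrixP => p q; rewrite !mxE ffunE.
Qed.

Definition cod_mx (t : codT R) (ab : L2idx) : 'M[R]_4 := \matrix_(r, q) t (r, q, ab).
Definition cod3 (t : codT R) := (cod_mx t e12, cod_mx t e13, cod_mx t e23).

Lemma cod3_inj : injective cod3.
Proof.
move=> t t' [/matrixP e12E /matrixP e13E /matrixP e23E].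
apply/ffunP => -[[r q] ab]; case: (L2idx_cases ab) => ->;
  [move: (e12E r q) | move: (e13E r q) | move: (e23E r q)]; by rewrite !mxE.
Qed.

End Coordinates.

Lemma cod_mx_Cmap (R : comNzRingType) (s : domT R) (ab : L2idx) :
  cod_mx (Cmap s) ab =
  Jmx R (val ab).2 *m dom_mx s (val ab).1 - Jmx R (val ab).1 *m dom_mx s (val ab).2.
Proof.
apply/matrixP => r q; rewrite !mxE ffunE -sumrB; apply: eq_bigr => p _.
rewrite (sum_wedgecoef (fun k j => s (p, q, k) * interior p (omega R j) r)).
by rewrite !mxE mulrC [in X in _ - X]mulrC.
Qed.

Lemma cod3_Cmap (R : comNzRingType) (s : domT R) :
  cod3 (Cmap s) = qwedge (Jmx R (o3 0)) (Jmx R (o3 1)) (Jmx R (o3 2)) (dom3 s).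
Proof. by rewrite /cod3 !cod_mx_Cmap. Qed.

Lemma Cmap_linear (R : nzRingType) (a : R) (x y : domT R) :
  Cmap [ffun i => a * x i + y i] = [ffun o => a * Cmap x o + Cmap y o].
Proof.
apply/ffunP => -[[r q] ab]; rewrite !ffunE.
rewrite mulr_sumr -big_split; apply: eq_bigr => p _.
rewrite mulr_sumr -big_split; apply: eq_bigr => k _.
rewrite mulr_sumr -big_split; apply: eq_bigr => j _.
by rewrite ffunE !mulrDl !mulrA.
Qed.

Lemma Cmap_bij (R : fieldType) : 2 != 0 :> R -> bijective (@Cmap R).
Proof.
move=> two_neq0.
have [w wK Kw] := qwedge_bij two_neq0
  (Jmx_sqr R (o3 0)) (Jmx_sqr R (o3 1)) (Jmx_sqr R (o3 2)) (Jmx_mul01 R).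
exists (fun t => dom_of3 (w (cod3 t))) => [s | t].
- by rewrite cod3_Cmap wK dom3K.
- by apply: cod3_inj; rewrite cod3_Cmap dom_of3K Kw.
Qed.

Theorem propositionA3 (R : realType) :
  (forall (a : R) (x y : domT R),
      Cmap [ffun i => a * x i + y i] = [ffun o => a * Cmap x o + Cmap y o])
  /\ bijective (@Cmap R).
Proof. by split; [exact: Cmap_linear | apply: Cmap_bij; rewrite pnatr_eq0]. Qed.
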